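(* Let $m$ be a $\mathbb T$-automaton over input alphabet $A_\tau=A\cup\{\tau\}$ with state set $X$, whose output algebra $B$ is also an $\omega$-additive monoid. Then for all $x_0\in X$, $a\in A$, $u\in A^*$: $\llbracket x_0\rrbracket^\tau_m(\epsilon)=o^m(x_0)+\sum_{i=1}^\infty a^m\big(\mathsf{do}\ x_1\leftarrow t^m(x_0,\tau);\dots;x_i\leftarrow t^m(x_{i-1},\tau);\ \eta_B(o^m(x_i))\big)$ and $\llbracket x_0\rrbracket^\tau_m(au)=\sum_{i=1}^\infty a^m\big(\mathsf{do}\ x_1\leftarrow t^m(x_0,\tau);\dots;x_{i-1}\leftarrow t^m(x_{i-2},\tau);x_i\leftarrow t^m(x_{i-1},a);\ \eta_B(\llbracket x_i\rrbracket^\tau_m(u))\big)$.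
   Context: $\mathsf{do}\ y\leftarrow p;\ q(y)$ denotes $q^\dagger(p)$ (Kleisli extension of the monad in question). An $\omega$-additive monoid is an algebra for the countably supported multiset monad (commutative monoid with countable sums). A $\mathbb T$-automaton over $A_\tau$: set $X$, $\mathbb T$-algebra $a^m:TB\to B$, $o^m:X\to B$, $t^m:A_\tau\times X\to TX$. Let $T_BX=B^{(B^X)}$ be the continuation monad ($\eta(x)=\lambda f.f(x)$, $f^\dagger(k)=\lambda c.k(\lambda x.f(x)(c))$), $\kappa_X:TX\to T_BX$, $\kappa_X(p)=\lambda f.a^m(Tf(p))$, $t^{m_*}=\kappa_X\circ t^m$, $o^{m_*}=o^m$; $T_BX$ is an $\omega$-additive monoid pointwise. Define the $\mathbb T_B$-automaton $m_v$ over $A$ with algebra $a^{m_v}(k)=k(\mathrm{id}_B)$, $t^{m_v}(x_0,a)=\sum_{i\ge1}\mathsf{do}\ x_1\leftarrow t^{m_*}(x_0,\tau);\dots;x_{i-1}\leftarrow t^{m_*}(x_{i-2},\tau);\ t^{m_*}(x_{i-1},a)$ and $o^{m_v}(x_0)=o^{m_*}(x_0)+\sum_{i\ge1}\big(\mathsf{do}\ x_1\leftarrow t^{m_*}(x_0,\tau);\dots;\ t^{m_*}(x_{i-1},\tau)\big)(o^{m_*})$. The observational trace semantics is $\llbracket x\rrbracket^\tau_m=\llbracket x\rrbracket_{m_v}$, where for any monad $\mathbb S$ and $\mathbb S$-automaton $n$ (algebra $a^n$, maps $o^n,t^n$) the trace semantics is determined by $\llbracket x\rrbracket_n(\epsilon)=o^n(x)$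 and $\llbracket x\rrbracket_n(au)=a^n(\mathsf{do}\ y\leftarrow t^n(a,x);\ \eta(\llbracket y\rrbracket_n(u)))$. *)

From Stdlib Require Import List.
Import ListNotations.

Record Monad := {
  MT   : Type -> Type;
  ret  : forall X : Type, X -> MT X;
  bind : forall X Y : Type, MT X -> (X -> MT Y) -> MT Y;
  bind_ret_l : forall (X Y : Type) (x : X) (f : X -> MT Y), bind X Y (ret X x) f = f x;
  bind_ret_r : forall (X : Type) (p : MT X), bind X X p (ret X) = p;
  bind_assoc : forall (X Y Z : Type) (p : MT X) (f : X -> MT Y) (g : Y -> MT Z),
      bind Y Z (bind X Y p f) g = bind X Z p (fun x => bind Y Z (f x) g)
}.
Arguments ret {m X} _.
Arguments bind {m X Y} _ _.

Definition fmap (M : Monad) (X Y : Type) (f : X -> Y) (p : MT M X) : MT M Y :=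
  bind p (fun x => ret (f x)).
Definition mu (M : Monad) (X : Type) (p : MT M (MT M X)) : MT M X :=
  bind p (fun q => q).

Definition is_algebra (M : Monad) (B : Type) (a : MT M B -> B) : Prop :=
  (forall b : B, a (ret b) = b) /\
  (forall p : MT M (MT M B), a (@fmap M _ _ a p) = a (@mu M _ p)).

(** * omega-additive monoids (algebras of the countably supported multiset
    monad), presented as commutative monoids with sums of countable families.
    Countable families are indexed by nat (finite families are padded by 0). *)
Definition nat_bij (p : nat -> nat) : Prop :=
  exists q : nat -> nat, (forall n, q (p n) = n) /\ (forall n, p (q n) = n).
Definition natpair_bij (e : nat -> nat * nat) : Prop :=
  exists q : nat * nat -> nat, (forall n, q (e n) = n) /\ (forall z, e (q z) = z).

Record OmegaAdditive (B : Type) := {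
  ozero : B;
  oplus : B -> B -> B;
  osum  : (nat -> B) -> B;
  osum_single : forall b : B,
      osum (fun n => match n with 0 => b | _ => ozero end) = b;
  osum_perm : forall (f : nat -> B) (p : nat -> nat), nat_bij p ->
      osum (fun n => f (p n)) = osum f;
  osum_flat : forall (f : nat * nat -> B) (e : nat -> nat * nat), natpair_bij e ->
      osum (fun i => osum (fun j => f (i, j))) = osum (fun n => f (e n));
  oplus_sum : forall x y : B,
      oplus x y = osum (fun n => match n with 0 => x | 1 => y | _ => ozero end)
}.

Definition osum1 (B : Type) (W : OmegaAdditive B) (g : nat -> B) : B :=
  osum B W (fun n => g (S n)).

(** Iterated do-notation along tau-steps:
    chain bnd step i x k  =  do x1 <- step x; ...; x_i <- step x_{i-1}; k x_i *)
Fixpoint chain (TX : Type -> Type) (X : Type)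
    (bnd : forall Y, TX X -> (X -> TX Y) -> TX Y)
    (step : X -> TX X) (R : Type) (i : nat) (x : X) (k : X -> TX R) : TX R :=
  match i with
  | 0 => k x
  | S i' => bnd R (step x) (fun y => chain TX X bnd step R i' y k)
  end.

Fixpoint trace (S : Type -> Type) (retS : forall Y, Y -> S Y)
    (bindS : forall Y Z, S Y -> (Y -> S Z) -> S Z)
    (A X B : Type) (alg : S B -> B) (o : X -> B) (t : A -> X -> S X)
    (x : X) (w : list A) : B :=
  match w with
  | [] => o x
  | a :: u => alg (bindS X B (t a x) (fun y => retS B (trace S retS bindS A X B alg o t y u)))
  end.

Definition TB (B X : Type) : Type := (X -> B) -> B.
Definition etaB (B X : Type) (x : X) : TB B X := fun f => f x.
Definition bindB (B X Y : Type) (k : TB B X) (f : X -> TB B Y) : TB B Y :=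
  fun c => k (fun x => f x c).

Definition kappa (M : Monad) (B : Type) (a : MT M B -> B) (X : Type)
    (p : MT M X) : TB B X := fun f => a (@fmap M _ _ f p).

Section Automaton.
Variables (M : Monad) (A X B : Type) (a : MT M B -> B) (W : OmegaAdditive B)
          (o : X -> B) (t : X -> option A -> MT M X).
(* A_tau = option A, with tau = None *)

Definition tstar (x : X) (l : option A) : TB B X := kappa M B a X (t x l).

Definition chainB (i : nat) (x : X) (k : X -> TB B X) : TB B X :=
  chain (TB B) X (fun Y => bindB B X Y) (fun y => tstar y None) X i x k.

Definition t_v (c : A) (x0 : X) : TB B X :=
  fun f => osum1 B W (fun i => chainB (pred i) x0 (fun y => tstar y (Some c)) f).

Definition o_v (x0 : X) : B :=
  oplus B W (o x0) (osum1 B W (fun i => chainB (pred i) x0 (fun y => tstar y None) o)).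

Definition a_v (k : TB B B) : B := k (fun b => b).

(** observational trace semantics  [[x]]^tau_m = [[x]]_{m_v} *)
Definition obs_trace (x : X) (w : list A) : B :=
  trace (TB B) (etaB B) (bindB B) A X B a_v o_v t_v x w.

Definition chainT (R : Type) (i : nat) (x : X) (k : X -> MT M R) : MT M R :=
  chain (MT M) X (fun Y => @bind M X Y) (fun y => t y None) R i x k.

End Automaton.

From Stdlib Require Import List FunctionalExtensionality.
Import ListNotations.

(** The observational trace semantics is defined through the continuation
    monad T_B: the saturated automaton m_v chains the transitions
    t^{m_*} = kappa o t^m with the Kleisli extension of T_B, and the algebra of
    m_v just evaluates a continuation at the identity.  The theorem moves these
    chains back into T itself.
    - [algebra_bind]: for an Eilenberg-Moore algebra a, evaluating a Kleisli
      extension first evaluates the inner computations: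
      a (p >>= q) = a (T (a o q) p).
    - [chainB_chainT]: by induction with [algebra_bind], a tau-chain in T_B
      evaluated at a continuation f equals a applied to the corresponding
      tau-chain in T, provided the final steps agree in the same sense.
    - [chain_unroll]: a chain of length i+1 is a chain of length i followed by
      one more step; this aligns the index shift in the empty-word clause. *)

Lemma chain_unroll (TX : Type -> Type) (X : Type)
    (bnd : forall Y, TX X -> (X -> TX Y) -> TX Y)
    (step : X -> TX X) (R : Type) (k : X -> TX R) (n : nat) (x : X) :
  chain TX X bnd step R (S n) x k
  = chain TX X bnd step R n x (fun y => bnd R (step y) k).
Proof.
  revert x; induction n as [|n IH]; intro x; simpl.
  - reflexivity.
  - f_equal. apply functional_extensionality. intro y. apply IH.
Qed.

Section AlgebraChains.
Variables (M : Monad) (B : Type) (a : MT M B -> B).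
Hypothesis Ha : is_algebra M B a.

Lemma algebra_bind (Y : Type) (p : MT M Y) (q : Y -> MT M B) :
  a (bind p q) = a (fmap M Y B (fun y => a (q y)) p).
Proof.
  destruct Ha as [_ Hmul].
  assert (Hbind : bind p q = mu M B (fmap M Y (MT M B) q p)).
  { unfold mu, fmap. rewrite bind_assoc. f_equal.
    apply functional_extensionality. intro y. now rewrite bind_ret_l. }
  assert (Hfmap : fmap M Y B (fun y => a (q y)) p
                  = fmap M (MT M B) B a (fmap M Y (MT M B) q p)).
  { unfold fmap. rewrite bind_assoc. f_equal.
    apply functional_extensionality. intro y. now rewrite bind_ret_l. }
  now rewrite Hbind, Hfmap, Hmul.
Qed.

Variables (A X : Type) (t : X -> option A -> MT M X).

Lemma chainB_chainT (K : X -> TB B X) (K' : X -> MT M B) (f : X -> B)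
    (HK : forall y, K y f = a (K' y)) (n : nat) (x : X) :
  chainB M A X B a t n x K f = a (chainT M A X t B n x K').
Proof.
  revert x; induction n as [|n IH]; intro x.
  - apply HK.
  - unfold chainB, chainT in *; simpl.
    (* both sides are a applied to T (fun y => a (chain y)) (t x None) *)
    rewrite algebra_bind. unfold bindB, tstar, kappa. f_equal. f_equal.
    apply functional_extensionality. intro y. apply IH.
Qed.

End AlgebraChains.

Theorem mainTheorem13 (M : Monad) (A X B : Type) (a : MT M B -> B)
  (Ha : is_algebra M B a) (W : OmegaAdditive B)
  (o : X -> B) (t : X -> option A -> MT M X)
  (x0 : X) (c : A) (u : list A) :
  obs_trace M A X B a W o t x0 [] =
    oplus B W (o x0)
      (osum1 B W (fun i => a (chainT M A X t B i x0 (fun y => ret (o y)))))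
  /\
  obs_trace M A X B a W o t x0 (c :: u) =
    osum1 B W (fun i => a (chainT M A X t B (pred i) x0
      (fun y => bind (t y (Some c)) (fun z => ret (obs_trace M A X B a W o t z u))))).
Proof.
  split.
  - (* empty word: the i-th summand is a tau-chain of length i ending in o *)
    unfold obs_trace; simpl. unfold o_v, osum1. do 2 f_equal.
    apply functional_extensionality. intro n; simpl.
    rewrite (chainB_chainT M B a Ha A X t _ (fun y => fmap M X B o (t y None)) o)
      by reflexivity.
    unfold chainT. now rewrite chain_unroll.
  -
    unfold obs_trace at 1; simpl. unfold a_v, bindB, etaB, t_v, osum1. f_equal.
    apply functional_extensionality. intro n; simpl.
    now apply (chainB_chainT M B a Ha A X t).
Qed.
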